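(* Let $T_1,T_2$ be $2\times 2$ matrices with entries in $\{0,1\}$, neither having a zero row, and let $\alpha_i=T_1^{(i)}\otimes T_2^{(i)}$ for $i=1,2$. If $|\alpha_1|=|\alpha_2|=1$, then $h(T)=0$.
   Context: $T_k^{(i)}$ denotes the $i$-th row of $T_k$, and for $v=(v_1,v_2)$, $w=(w_1,w_2)$ the dyadic product is $v\otimes w=(v_1w_1,v_1w_2,v_2w_1,v_2w_2)$; $|\alpha_i|$ is the sum of the entries of $\alpha_i$ (the number of ones). Define sequences $\gamma^{[s_j]}_{i,n}$ ($i,j\in\{1,2\}$, $n\ge0$) by $\gamma^{[s_j]}_{i,0}=1$ and, for $n\ge1$, $$\gamma^{[s_1]}_{i,n}=\sum_{j,k=1}^2T_1(i,j)T_2(i,k)\,\gamma^{[s_1]}_{j,n-1}\gamma^{[s_2]}_{k,n-1},\qquad \gamma^{[s_2]}_{i,n}=\sum_{j=1}^2T_1(i,j)\,\gamma^{[s_1]}_{j,n-1}.$$ (These are the paper's counts of admissible blocks with root symbol $i$ for the $G$-vertex shift $X_T=\{t\in\{1,2\}^G: T_k(t_g,t_{gs_k})=1\}$ on the monoid $G=\langle s_1,s_2\mid s_2s_2=s_2\rangle$.) Let $l_0=1$, $l_1=2$, $l_{k+1}=l_k+l_{k-1}$ and $|E_n|=\sum_{k=0}^n l_k$ (the number of elements of $G$ of word length at most $n$). The entropy is $h(T)=\limsup_{n\to\infty}\frac{\ln(\gamma^{[s_1]}_{1,n}+\gamma^{[s_1]}_{2,n})}{|E_n|}$. *)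

From mathcomp Require Import all_boot all_order all_algebra.
From mathcomp Require Import all_classical all_reals all_analysis.
Set Implicit Arguments. Unset Strict Implicit. Unset Printing Implicit Defensive.
Import Order.TTheory GRing.Theory Num.Theory.

(* 0/1 matrices are represented as 'M[nat]_2 with entries <= 1;
   index 0 of 'I_2 is symbol 1 of the paper, index 1 is symbol 2. *)

Definition zero_one_mx (T : 'M[nat]_2) : Prop := forall i j, T i j <= 1.
Definition no_zero_row (T : 'M[nat]_2) : Prop := forall i, exists j, T i j != 0.

Definition dyad (v w : 'I_2 -> nat) : seq nat :=
  [:: v ord0 * w ord0; v ord0 * w ord_max; v ord_max * w ord0; v ord_max * w ord_max].

Definition alpha (T1 T2 : 'M[nat]_2) (i : 'I_2) : seq nat :=
  dyad (fun j => T1 i j) (fun j => T2 i j).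

Definition abs_vec (a : seq nat) : nat := sumn a.

Fixpoint gamma (T1 T2 : 'M[nat]_2) (n : nat) : ('I_2 -> nat) * ('I_2 -> nat) :=
  match n with
  | 0 => (fun _ => 1, fun _ => 1)
  | n'.+1 =>
      let g := gamma T1 T2 n' in
      (fun i => \sum_(j < 2) \sum_(k < 2) T1 i j * T2 i k * g.1 j * g.2 k,
       fun i => \sum_(j < 2) T1 i j * g.1 j)
  end.

Definition gamma_s1 T1 T2 (i : 'I_2) n := (gamma T1 T2 n).1 i.
Definition gamma_s2 T1 T2 (i : 'I_2) n := (gamma T1 T2 n).2 i.

Fixpoint lseq (k : nat) : nat :=
  match k with
  | 0 => 1
  | 1 => 2
  | (k'.+1 as k1).+1 => lseq k1 + lseq k'
  end.

Definition cardE (n : nat) : nat := \sum_(0 <= k < n.+1) lseq k.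

Local Open Scope ring_scope.

Definition entropy (R : realType) (T1 T2 : 'M[nat]_2) : \bar R :=
  limn_esup (fun n : nat =>
    ((ln ((gamma_s1 T1 T2 ord0 n + gamma_s1 T1 T2 ord_max n)%N%:R : R))
      / (cardE n)%:R)%:E).

(* When every row of T1 and of T2 sums to 1, a block is determined by its root
   symbol, so all the counts gamma are 1 and the numerator of the entropy is the
   constant ln 2; dividing by the unbounded |E_n| gives 0.  The hypothesis
   |alpha_i| = 1 is exactly this, since |alpha_i| is the product of the i-th row
   sums of T1 and T2. *)

From Pilot Require Import Defs.
From mathcomp Require Import all_boot all_order all_algebra.
From mathcomp Require Import all_classical all_reals all_analysis.
Import numFieldNormedType.Exports.
Import Order.TTheory GRing.Theory Num.Theory.

Lemma abs_alpha (T1 T2 : 'M[nat]_2) (i : 'I_2) :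
  abs_vec (alpha T1 T2 i) = ((\sum_(j < 2) T1 i j) * \sum_(k < 2) T2 i k)%N.
Proof.
rewrite /abs_vec /alpha /dyad /= !big_ord_recl !big_ord0 (_ : lift _ _ = ord_max);
  last exact: val_inj.
by rewrite !addn0 mulnDl !mulnDr !addnA.
Qed.

Lemma abs_alpha_eq1 (T1 T2 : 'M[nat]_2) (i : 'I_2) :
  abs_vec (alpha T1 T2 i) = 1%N ->
  (\sum_(j < 2) T1 i j = 1)%N /\ (\sum_(k < 2) T2 i k = 1)%N.
Proof. by rewrite abs_alpha => /eqP; rewrite muln_eq1 => /andP[/eqP-> /eqP->]. Qed.

Lemma gamma_eq1 (T1 T2 : 'M[nat]_2) :
  (forall i, \sum_(j < 2) T1 i j = 1)%N -> (forall i, \sum_(k < 2) T2 i k = 1)%N ->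
  forall n i, gamma_s1 T1 T2 i n = 1%N /\ gamma_s2 T1 T2 i n = 1%N.
Proof.
move=> rows1 rows2; rewrite /gamma_s1 /gamma_s2.
elim=> [//|n IH] i /=; split.
- under eq_bigr => j _ do under eq_bigr => k _ do
    rewrite (proj1 (IH j)) (proj2 (IH k)) !muln1.
  by rewrite -big_distrlr /= rows1 rows2.
- by under eq_bigr => j _ do rewrite (proj1 (IH j)) muln1; rewrite rows1.
Qed.

Lemma lseq_gt0 k : (0 < lseq k)%N.
Proof. by elim: k => [|[|k] IH] //=; rewrite addn_gt0 IH. Qed.

(* [Defs.] is needed: fintype's lemma [cardE] shadows the definition. *)
Lemma cardE_gt n : (n < Defs.cardE n)%N.
Proof.
rewrite /Defs.cardE; elim: n => [|n IH]; first by rewrite big_nat1.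
by rewrite big_nat_recr // -[n.+2]addn1 leq_add ?lseq_gt0.
Qed.

Local Open Scope ring_scope.
Local Open Scope classical_set_scope.

Lemma cvg_div_cardE (R : realType) (c : R) :
  c / (Defs.cardE n)%:R @[n --> \oo] --> 0.
Proof.
have cardE_gt0 n : 0 < (Defs.cardE n)%:R :> R.
  by rewrite ltr0n (leq_ltn_trans _ (cardE_gt n)).
have cardEy : ((Defs.cardE n)%:R : R) @[n --> \oo] --> +oo.
  apply/cvgrnyP/cvgnyPge => A; near=> n.
  by rewrite (leq_trans _ (ltnW (cardE_gt n))) //; near: n; exact: nbhs_infty_ge.
rewrite -(mulr0 c); apply: cvgMl_tmp.
exact: (gtr0_cvgV0 (nearW _ cardE_gt0)).2 cardEy.
Unshelve. all: by end_near. Qed.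

Theorem proposition1 (R : realType) (T1 T2 : 'M[nat]_2) :
  zero_one_mx T1 -> zero_one_mx T2 ->
  no_zero_row T1 -> no_zero_row T2 ->
  abs_vec (alpha T1 T2 ord0) = 1%N -> abs_vec (alpha T1 T2 ord_max) = 1%N ->
  entropy R T1 T2 = 0%E.
Proof.
move=> _ _ _ _ /abs_alpha_eq1 rows0 /abs_alpha_eq1 rows1.
have rows i : (\sum_(j < 2) T1 i j = 1 /\ \sum_(k < 2) T2 i k = 1)%N.
  have [->|->] : i = ord0 \/ i = ord_max.
    by case: i => -[|[|//]] ?; [left | right]; apply: val_inj.
  - exact: rows0.
  - exact: rows1.
have gamma1 := gamma_eq1 T1 T2 (fun i => proj1 (rows i)) (fun i => proj2 (rows i)).
rewrite /entropy; under eq_fun do rewrite (proj1 (gamma1 _ ord0)) (proj1 (gamma1 _ ord_max)).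
apply: (cvg_limn_einf_sup _).2; apply: cvg_EFin; first exact: nearW.
exact: cvg_div_cardE.
Qed.
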